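(* Assume the model, algorithm and hypotheses described in the context. Set $\lambda=C_{\lambda}\sigma\sqrt{np\log n}$ for some large constant $C_{\lambda}>0$ and $\tau=C_\tau\sigma\sqrt{\log n}$ for a large enough constant $C_\tau>0$. Suppose that $n^{2}p\gg\kappa^{3}\mu rn\log^{2}n$ and $\frac{\sigma}{\sigma_{\min}}\sqrt{\frac{n}{p}}\ll\frac{1}{\sqrt{\kappa^{4}\mu r\log n}}$, and take the step size $\eta\asymp1/(n\kappa^{3}\sigma_{\max})$. Let $t_0=n^{47}$. If the iterates satisfy hypotheses (a)–(e) for all $0\le t\le t_0$ and the descent property (f) for all $1\le t\le t_0$, then with probability at least $1-O(n^{-50})$, \[ \min_{0\leq t<t_{0}}\left\Vert \nabla f\left(X^{t},Y^{t};S^{t}\right)\right\Vert _{\mathrm{F}}\leq\frac{1}{n^{20}}\frac{\lambda}{p}\sqrt{\sigma_{\min}}. \]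
   Context: Notation: for a matrix $A$, $\|A\|$ is its spectral norm, $\|A\|_{\mathrm F}$ its Frobenius norm, $\|A\|_{2,\infty}$ the largest Euclidean norm of its rows, $\|A\|_1=\sum_{i,j}|A_{ij}|$. $\mathcal{O}^{r\times r}$ is the set of $r\times r$ orthogonal matrices. For $\Omega\subseteq[n]\times[n]$, $\mathcal P_\Omega$ sets all entries outside $\Omega$ to zero. $\mathcal S_\tau$ is entrywise soft thresholding, $\mathcal S_\tau(x)=\mathrm{sign}(x)\max\{|x|-\tau,0\}$. The notation $a\ll b$ (resp. $a\gg b$) means $a\le b/c$ (resp. $a\ge cb$) for a sufficiently large universal constant $c>0$; $a\asymp b$ means equality up to universal constant factors. Model: $L^\star\in\mathbb R^{n\times n}$ has rank $r$ and SVD $L^\star=U^\star\Sigma^\star V^{\star\top}$, with largest/smallest nonzero singular values $\sigma_{\max},\sigma_{\min}$ and condition number $\kappa=\sigma_{\max}/\sigma_{\min}$; it is $\mu$-incoherent: $\|U^\star\|_{2,\infty},\|V^\star\|_{2,\infty}\le\sqrt{\mu r/n}$. Let $X^\star=U^\star(\Sigma^\star)^{1/2}$, $Y^\star=V^\star(\Sigma^\star)^{1/2}$, $F^\star=[X^{\star\top},Y^{\star\top}]^\top\in\mathbb R^{2n\times r}$. The observation set $\Omega_{\mathsf{obs}}$ contains each $(i,j)$ independently with probability $p$. The outlier matrix $S^\star$ is supported on a set $\Omega^\star$ (each observed entry corrupted with probability $\rho_{\mathsf s}$), and $\Omega^\star\subseteq\Omega_{\mathsf{aug}}\subseteq\Omega_{\mathsf{obs}}$,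 where $\Omega_{\mathsf{aug}}$ contains each $(i,j)$ independently with probability $p\rho_{\mathsf{aug}}$, $\rho_{\mathsf s}\le\rho_{\mathsf{aug}}\le 1$; the signs of the nonzero entries of $S^\star$ are i.i.d. symmetric $\pm1$, independent of everything else. The noise $E$ has i.i.d. entries, symmetric about zero, sub-Gaussian with sub-Gaussian norm at most $\sigma$. One observes $M=\mathcal P_{\Omega_{\mathsf{obs}}}(L^\star+S^\star+E)$. Loss: $f(X,Y;S)=\frac1{2p}\|\mathcal P_{\Omega_{\mathsf{obs}}}(XY^\top+S-M)\|_{\mathrm F}^2+\frac{\lambda}{2p}\|X\|_{\mathrm F}^2+\frac{\lambda}{2p}\|Y\|_{\mathrm F}^2$ for $X,Y\in\mathbb R^{n\times r}$, $S\in\mathbb R^{n\times n}$, and $F(X,Y;S)=f(X,Y;S)+\frac{\tau}{p}\|S\|_1$; $\nabla f$ denotes the gradient with respect to $(X,Y)$. Algorithm: $X^0=X^\star$, $Y^0=Y^\star$, $S^0=S^\star$, and for $t\ge0$: $X^{t+1}=X^t-\eta\nabla_X f(X^t,Y^t;S^t)$, $Y^{t+1}=Y^t-\eta\nabla_Y f(X^t,Y^t;S^t)$, $S^{t+1}=\mathcal S_\tau[\mathcal P_{\Omega_{\mathsf{obs}}}(M-X^{t+1}Y^{t+1\top})]$. Let $F^t=[X^{t\top},Y^{t\top}]^\top$ and $H^t=\arg\min_{R\in\mathcal O^{r\times r}}\|F^tR-F^\star\|_{\mathrm F}$. Hypotheses at iteration $t$ (for some universal constants $C_{\mathrm F},C_{\mathrm{op}},C_\infty,C_{\mathrm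 B},C_{\mathrm S}>0$), writing $\psi=\frac{\sigma}{\sigma_{\min}}\sqrt{\frac np}+\frac{\lambda}{p\sigma_{\min}}$ and $\psi_\infty=\frac{\sigma}{\sigma_{\min}}\sqrt{\frac {n\log n}p}+\frac{\lambda}{p\sigma_{\min}}$: (a) $\|F^tH^t-F^\star\|_{\mathrm F}\le C_{\mathrm F}\psi\|X^\star\|_{\mathrm F}$; (b) $\|F^tH^t-F^\star\|\le C_{\mathrm{op}}\psi\|X^\star\|$; (c) $\|F^tH^t-F^\star\|_{2,\infty}\le C_\infty\kappa\psi_\infty\|F^\star\|_{2,\infty}$; (d) $\|X^{t\top}X^t-Y^{t\top}Y^t\|_{\mathrm F}\le C_{\mathrm B}\kappa\eta\psi\sqrt r\sigma_{\max}^2$; (e) $\|S^t-S^\star\|\le C_{\mathrm S}\sigma\sqrt{np}$. Descent property at iteration $t\ge1$: (f) $F(X^t,Y^t;S^t)\le F(X^{t-1},Y^{t-1};S^{t-1})-\frac\eta2\|\nabla f(X^{t-1},Y^{t-1};S^{t-1})\|_{\mathrm F}^2$. Probabilities are over $\Omega_{\mathsf{obs}},\Omega_{\mathsf{aug}}$, the signs of $S^\star$ and $E$. *)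

From HB Require Import structures.
From mathcomp Require Import all_boot all_order all_algebra.
From mathcomp Require Import all_classical all_reals all_analysis.
Set Implicit Arguments. Unset Strict Implicit. Unset Printing Implicit Defensive.
Import Order.TTheory GRing.Theory Num.Theory.
Local Open Scope ring_scope.
Local Open Scope classical_set_scope.

Definition frob (R : realType) m n (A : 'M[R]_(m, n)) : R :=
  Num.sqrt (\sum_i \sum_j A i j ^+ 2).

Definition vnorm (R : realType) n (x : 'cV[R]_n) : R :=
  Num.sqrt (\sum_i x i 0 ^+ 2).

Definition spec (R : realType) m n (A : 'M[R]_(m, n)) : R :=
  sup [set vnorm (A *m x) | x in [set x : 'cV[R]_n | vnorm x = 1]].

Definition norm2inf (R : realType) m n (A : 'M[R]_(m, n)) : R :=
  \big[Num.max/0]_i Num.sqrt (\sum_j A i j ^+ 2).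

Definition norm1 (R : realType) m n (A : 'M[R]_(m, n)) : R :=
  \sum_i \sum_j `|A i j|.

Definition orthogonal_mx (R : realType) r (Q : 'M[R]_r) : Prop :=
  Q^T *m Q = 1%:M.

Definition projOmega (R : realType) n (O : 'I_n -> 'I_n -> bool) (A : 'M[R]_n)
  : 'M[R]_n := \matrix_(i, j) (if O i j then A i j else 0).

Definition soft (R : realType) (tau x : R) : R :=
  Num.sg x * Num.max (`|x| - tau) 0.

Definition softmx (R : realType) n (tau : R) (A : 'M[R]_n) : 'M[R]_n :=
  map_mx (soft tau) A.

Definition resid (R : realType) n r (O : 'I_n -> 'I_n -> bool) (M : 'M[R]_n)
  (X Y : 'M[R]_(n, r)) (S : 'M[R]_n) : 'M[R]_n :=
  projOmega O (X *m Y^T + S - M).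

Definition floss (R : realType) n r (p lam : R) (O : 'I_n -> 'I_n -> bool)
  (M : 'M[R]_n) (X Y : 'M[R]_(n, r)) (S : 'M[R]_n) : R :=
  (2 * p)^-1 * frob (resid O M X Y S) ^+ 2
  + lam / (2 * p) * frob X ^+ 2 + lam / (2 * p) * frob Y ^+ 2.

Definition Floss (R : realType) n r (p lam tau : R) (O : 'I_n -> 'I_n -> bool)
  (M : 'M[R]_n) (X Y : 'M[R]_(n, r)) (S : 'M[R]_n) : R :=
  floss p lam O M X Y S + tau / p * norm1 S.

Definition gradX (R : realType) n r (p lam : R) (O : 'I_n -> 'I_n -> bool)
  (M : 'M[R]_n) (X Y : 'M[R]_(n, r)) (S : 'M[R]_n) : 'M[R]_(n, r) :=
  p^-1 *: (resid O M X Y S *m Y) + (lam / p) *: X.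

Definition gradY (R : realType) n r (p lam : R) (O : 'I_n -> 'I_n -> bool)
  (M : 'M[R]_n) (X Y : 'M[R]_(n, r)) (S : 'M[R]_n) : 'M[R]_(n, r) :=
  p^-1 *: ((resid O M X Y S)^T *m X) + (lam / p) *: Y.

Definition gradnorm (R : realType) n r (p lam : R) (O : 'I_n -> 'I_n -> bool)
  (M : 'M[R]_n) (X Y : 'M[R]_(n, r)) (S : 'M[R]_n) : R :=
  Num.sqrt (frob (gradX p lam O M X Y S) ^+ 2 + frob (gradY p lam O M X Y S) ^+ 2).

Fixpoint gd_iter (R : realType) n r (p lam tau eta : R) (O : 'I_n -> 'I_n -> bool)
  (M : 'M[R]_n) (X0 Y0 : 'M[R]_(n, r)) (S0 : 'M[R]_n) (t : nat)
  : 'M[R]_(n, r) * 'M[R]_(n, r) * 'M[R]_n :=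
  match t with
  | 0 => (X0, Y0, S0)
  | t'.+1 =>
    let: (X, Y, St) := gd_iter p lam tau eta O M X0 Y0 S0 t' in
    let X' := X - eta *: gradX p lam O M X Y St in
    let Y' := Y - eta *: gradY p lam O M X Y St in
    (X', Y', softmx tau (projOmega O (M - X' *m Y'^T)))
  end.

Definition smax (R : realType) r (s : 'rV[R]_r) : R := \big[Num.max/0]_i s 0 i.
Definition smin (R : realType) r (s : 'rV[R]_r) : R :=
  \big[Num.min/smax s]_i s 0 i.
Definition kappa (R : realType) r (s : 'rV[R]_r) : R := smax s / smin s.

Definition Lstar (R : realType) n r (U V : 'M[R]_(n, r)) (s : 'rV[R]_r) : 'M[R]_n :=
  U *m diag_mx s *m V^T.
(* X* = U Sigma^{1/2}, Y* = V Sigma^{1/2} *)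
Definition halfmx (R : realType) n r (U : 'M[R]_(n, r)) (s : 'rV[R]_r)
  : 'M[R]_(n, r) := U *m diag_mx (map_mx Num.sqrt s).

Definition mutual_indep (R : realType) (d : measure_display) (T : measurableType d)
  (P : probability T R) (K : finType) (G : K -> set (set T)) : Prop :=
  forall (J : {set K}) (A : K -> set T), (forall k, k \in J -> G k (A k)) ->
    P (\bigcap_(k in [set k | k \in J]) A k) = (\prod_(k in J) P (A k))%E.

Definition ij_type n := ('I_n * 'I_n)%type.

(* event collections: sigma(Omega-block (i,j)), sigma(sign_ij), sigma(E_ij) *)
Definition model_events (R : realType) (d : measure_display) (T : measurableType d) n
  (obs aug star : T -> 'I_n -> 'I_n -> bool) (sg : T -> 'I_n -> 'I_n -> R)
  (E : T -> 'M[R]_n) (k : (ij_type n + ij_type n) + ij_type n) : set (set T) :=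
  match k with
  | inl (inl (i, j)) => [set A | exists B : set (bool * bool * bool),
                           A = [set w | B (obs w i j, aug w i j, star w i j)]]
  | inl (inr (i, j)) => [set A | exists B : set R, measurable B /\
                           A = (fun w => sg w i j) @^-1` B]
  | inr (i, j) => [set A | exists B : set R, measurable B /\
                           A = (fun w => E w i j) @^-1` B]
  end.

Definition rpca_model (R : realType) (d : measure_display) (T : measurableType d)
  (P : probability T R) n (obs aug star : T -> 'I_n -> 'I_n -> bool)
  (sg : T -> 'I_n -> 'I_n -> R) (E : T -> 'M[R]_n) (p rhos rhoaug sigma : R) : Prop :=
  [/\
      forall i j, [/\ measurable [set w | obs w i j], measurable [set w | aug w i j],
                      measurable [set w | star w i j],
                      measurable_fun setT (fun w => sg w i j) &
                      measurable_fun setT (fun w => E w i j)],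
      mutual_indep P (model_events obs aug star sg E),
      forall i j, [/\ forall w, star w i j -> aug w i j,
                      forall w, aug w i j -> obs w i j,
                      P [set w | obs w i j] = p%:E,
                      P [set w | aug w i j] = (p * rhoaug)%:E &
                      P [set w | star w i j] = (p * rhos)%:E],
      forall i j, (forall w, sg w i j = 1 \/ sg w i j = -1) /\
                  P [set w | sg w i j = 1] = (2^-1)%:E &
      (* i.i.d., symmetric, sub-Gaussian noise with psi_2 norm <= sigma *)
      forall i j, [/\ forall k l (B : set R), measurable B ->
                        P ((fun w => E w i j) @^-1` B) = P ((fun w => E w k l) @^-1` B),
                      forall (B : set R), measurable B ->
                        P ((fun w => E w i j) @^-1` B) = P ((fun w => - E w i j) @^-1` B) &
                      forall t : R, sigma < t ->
                        (\int[P]_w (expR (E w i j ^+ 2 / t ^+ 2))%:E <= 2%:E)%E]].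

Definition Sstar (R : realType) (d : measure_display) (T : measurableType d) n
  (star : T -> 'I_n -> 'I_n -> bool) (sg : T -> 'I_n -> 'I_n -> R) (Smag : 'M[R]_n)
  (w : T) : 'M[R]_n :=
  \matrix_(i, j) (if star w i j then sg w i j * Smag i j else 0).

Definition hyps_ae (R : realType) n r (CF Cop Cinf CB CS : R)
  (sigma p lam eta : R) (s : 'rV[R]_r) (Xs Ys : 'M[R]_(n, r)) (Ss : 'M[R]_n)
  (X Y : 'M[R]_(n, r)) (S : 'M[R]_n) : Prop :=
  let psi := sigma / smin s * Num.sqrt (n%:R / p) + lam / (p * smin s) in
  let psiinf := sigma / smin s * Num.sqrt (n%:R * ln n%:R / p) + lam / (p * smin s) in
  let Fs := col_mx Xs Ys in
  let F := col_mx X Y in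
  [/\ exists H : 'M[R]_r,
        [/\ orthogonal_mx H,
            (forall Q : 'M[R]_r, orthogonal_mx Q -> frob (F *m H - Fs) <= frob (F *m Q - Fs)),
            frob (F *m H - Fs) <= CF * psi * frob Xs,
            spec (F *m H - Fs) <= Cop * psi * spec Xs &
            norm2inf (F *m H - Fs) <= Cinf * kappa s * psiinf * norm2inf Fs],
      frob (X^T *m X - Y^T *m Y) <= CB * kappa s * eta * psi * Num.sqrt r%:R * smax s ^+ 2 &
      spec (S - Ss) <= CS * sigma * Num.sqrt (n%:R * p)].

(* Summing the descent property (f) over t < t0 gives
     (eta/2) t0 min_t |grad f(X^t,Y^t;S^t)|_F^2 <= F(X^0,Y^0;S^0) - F(X^t0,Y^t0;S^t0).
   The iteration starts at the ground truth, where the data-fit term only sees the noise; by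
   sub-Gaussian tails and a union bound, |E_ij| <= sigma n for all (i,j) outside an event of
   probability O(n^-50). At t0 the loss is at least its regularizers, and hypotheses (a) and (e)
   make these close to those of the ground truth. So the gap is O(sigma^2/p n^4 log n), whereas
   (eta/2) t0 (lambda/p n^-20 sqrt sigma_min)^2 is of order sigma^2/p n^5 log n since t0 = n^47.
   Without noise, (a) and (e) force the iterate at t0 to be a rotation of the ground truth and the
   gap vanishes; small n are absorbed into the constant. *)

From HB Require Import structures.
From mathcomp Require Import all_boot all_order all_algebra.
From mathcomp Require Import all_classical all_reals all_analysis.
From mathcomp Require Import ring lra measurable_realfun.
Import Order.TTheory GRing.Theory Num.Theory.
Local Open Scope ring_scope.
Local Open Scope classical_set_scope.

Section MatrixNorms.
Context {R : realType}.

Lemma frob_ge0 {m n} (A : 'M[R]_(m, n)) : 0 <= frob A.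
Proof. exact: sqrtr_ge0. Qed.

Lemma frob_sqr {m n} (A : 'M[R]_(m, n)) : frob A ^+ 2 = \sum_i \sum_j A i j ^+ 2.
Proof.
by rewrite sqr_sqrtr // sumr_ge0 // => i _; rewrite sumr_ge0 // => j _; rewrite sqr_ge0.
Qed.

Lemma frob_sqr_trace {m n} (A : 'M[R]_(m, n)) : frob A ^+ 2 = \tr (A *m A^T).
Proof.
rewrite frob_sqr; apply: eq_bigr => i _; rewrite mxE.
by apply: eq_bigr => j _; rewrite mxE expr2.
Qed.

Lemma frob_col_mx {m1 m2 n} (X : 'M[R]_(m1, n)) (Y : 'M[R]_(m2, n)) :
  frob (col_mx X Y) ^+ 2 = frob X ^+ 2 + frob Y ^+ 2.
Proof.
rewrite !frob_sqr big_split_ord; congr (_ + _); apply: eq_bigr => i _;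
  by apply: eq_bigr => j _; rewrite ?col_mxEu ?col_mxEd.
Qed.

Lemma orthogonal_mx_tr {r} (H : 'M[R]_r) : orthogonal_mx H -> H *m H^T = 1%:M.
Proof. exact: mulmx1C. Qed.

Lemma frob_mulmx_orthogonal {m r} (F : 'M[R]_(m, r)) (H : 'M[R]_r) :
  orthogonal_mx H -> frob (F *m H) = frob F.
Proof.
move=> oH; apply/eqP; rewrite -(@eqrXn2 _ 2) ?frob_ge0 // !frob_sqr_trace.
by rewrite trmx_mul mulmxA -(mulmxA F) orthogonal_mx_tr // mulmx1.
Qed.

Lemma frob_orthonormal_cols {n r} (U : 'M[R]_(n, r)) :
  U^T *m U = 1%:M -> frob U ^+ 2 = r%:R.
Proof. by move=> hU; rewrite frob_sqr_trace mxtrace_mulC hU mxtrace1. Qed.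

Lemma frob_le0_eq0 {m n} (A : 'M[R]_(m, n)) : frob A <= 0 -> A = 0.
Proof.
move=> hA; have : frob A ^+ 2 = 0 by apply/eqP; rewrite sqrf_eq0 eq_le hA frob_ge0.
have sq_ge0 i j : 0 <= A i j ^+ 2 := sqr_ge0 (A i j).
rewrite frob_sqr => hsum; apply/matrixP => i j; rewrite mxE; apply/eqP.
have row0 := psumr_eq0P (fun i _ => sumr_ge0 _ (fun j _ => sq_ge0 i j)) hsum.
by rewrite -sqrf_eq0 (psumr_eq0P (fun j _ => sq_ge0 i j) (row0 i isT)).
Qed.

Lemma frob_sqr_sub_le {m n} (A B : 'M[R]_(m, n)) (th a : R) :
  0 <= th -> frob (B - A) <= th * a ->
  frob A ^+ 2 - frob B ^+ 2 <= th * (frob A ^+ 2 + a ^+ 2).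
Proof.
rewrite le_eqVlt => /predU1P[<- hBA|th_gt0 hBA].
  move: hBA; rewrite mul0r => /frob_le0_eq0/eqP; rewrite subr_eq0 => /eqP->.
  by rewrite subrr mul0r.
have hd : frob A ^+ 2 - frob B ^+ 2 <= th * frob A ^+ 2 + frob (B - A) ^+ 2 / th.
  rewrite !frob_sqr -sumrB mulr_sumr mulr_suml -big_split /=; apply: ler_sum => i _.
  rewrite -sumrB mulr_sumr mulr_suml -big_split /=; apply: ler_sum => j _.
  rewrite -subr_ge0 !mxE; set u := A i j; set v := B i j.
  have -> : th * u ^+ 2 + (v - u) ^+ 2 / th - (u ^+ 2 - v ^+ 2)
         = th * (u + (v - u) / th) ^+ 2 + (v - u) ^+ 2.
    by field; rewrite gt_eqF.
  by rewrite addr_ge0 ?sqr_ge0 // mulr_ge0 ?sqr_ge0 // ltW.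
have hsq : frob (B - A) ^+ 2 / th <= th * a ^+ 2.
  rewrite ler_pdivrMr // mulrAC -expr2 -exprMn.
  by rewrite lerXn2r ?nnegrE ?frob_ge0 // (le_trans (frob_ge0 _) hBA).
by rewrite mulrDr; apply: (le_trans hd); rewrite lerD2l.
Qed.

Lemma frob_sqr_le_entries {m k} (A : 'M[R]_(m, k)) (a : R) :
  (forall i j, `|A i j| <= a) -> frob A ^+ 2 <= (m * k)%:R * a ^+ 2.
Proof.
move=> hA; have -> : (m * k)%:R * a ^+ 2 = \sum_(i < m) \sum_(j < k) a ^+ 2.
  by rewrite !sumr_const !card_ord mulr_natl mulnC mulrnA.
rewrite frob_sqr; apply: ler_sum => i _; apply: ler_sum => j _.
by rewrite -real_normK ?num_real // lerXn2r ?nnegrE // (le_trans _ (hA i j)).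
Qed.

Lemma vnorm_ge_entry {n} (y : 'cV[R]_n) i : `|y i 0| <= vnorm y.
Proof.
rewrite /vnorm -sqrtr_sqr ler_sqrt; last by apply: sumr_ge0 => k _; exact: sqr_ge0.
by rewrite (bigD1 i) //= lerDl sumr_ge0 // => k _; rewrite sqr_ge0.
Qed.

Lemma vnorm_delta {n} (j : 'I_n) : vnorm (delta_mx j 0 : 'cV[R]_n) = 1.
Proof.
rewrite /vnorm (bigD1 j) //= big1 ?addr0; first by rewrite mxE !eqxx expr1n sqrtr1.
by move=> k hk; rewrite mxE (negbTE hk) expr0n.
Qed.

Lemma entry_le_spec {m n} (A : 'M[R]_(m, n)) i j : `|A i j| <= spec A.
Proof.
set S := [set vnorm (A *m x) | x in [set x : 'cV[R]_n | vnorm x = 1]].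
have Sej : S (vnorm (A *m delta_mx j 0)) by exists (delta_mx j 0) => //; exact: vnorm_delta.
have ubS : ubound S (Num.sqrt (\sum_i (\sum_k `|A i k|) ^+ 2)).
  move=> _ [x /= x1 <-]; rewrite ler_sqrt; last by apply: sumr_ge0 => k _; exact: sqr_ge0.
  apply: ler_sum => i' _; rewrite -real_normK ?num_real // lerXn2r ?nnegrE ?sumr_ge0 //.
  rewrite mxE (le_trans (ler_norm_sum _ _ _)) // ler_sum // => k _.
  by rewrite normrM ler_piMr // -x1 vnorm_ge_entry.
apply: le_trans (sup_upper_bound (conj (ex_intro _ _ Sej) (ex_intro _ _ ubS)) Sej).
by rewrite -colE; have := vnorm_ge_entry (col j A) i; rewrite mxE.
Qed.

Lemma spec_le0_eq0 {m n} (A : 'M[R]_(m, n)) : spec A <= 0 -> A = 0.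
Proof.
move=> hA; apply/matrixP => i j; rewrite mxE; apply/eqP; rewrite -normr_le0.
exact: le_trans (entry_le_spec A i j) hA.
Qed.

Lemma norm1_sub_le_spec {n} (S S' : 'M[R]_n) :
  norm1 S' - norm1 S <= (n * n)%:R * spec (S - S').
Proof.
have -> : (n * n)%:R * spec (S - S') = \sum_(i < n) \sum_(j < n) spec (S - S').
  by rewrite !sumr_const !card_ord mulr_natl -mulrnA.
rewrite /norm1 -sumrB; apply: ler_sum => i _; rewrite -sumrB; apply: ler_sum => j _.
by rewrite (le_trans _ (entry_le_spec _ i j)) // !mxE distrC lerB_dist.
Qed.

End MatrixNorms.

Section SingularValues.
Context {R : realType} {r : nat} (s : 'rV[R]_r).
Hypotheses (r_gt0 : (0 < r)%N) (s_gt0 : forall i, 0 < s 0 i).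

Lemma smax_gt0 : 0 < smax s.
Proof. exact: lt_le_trans (s_gt0 (Ordinal r_gt0)) (le_bigmax _ _ _). Qed.

Lemma smin_gt0 : 0 < smin s.
Proof.
by apply: (big_ind (fun x => 0 < x)) => [|x y x0 y0|i _]; rewrite ?lt_min ?x0 ?smax_gt0.
Qed.

Lemma smax_kappa : smax s = kappa s * smin s.
Proof. by rewrite /kappa divfK // gt_eqF // smin_gt0. Qed.

Lemma kappa_ge1 : 1 <= kappa s.
Proof.
rewrite /kappa ler_pdivlMr ?mul1r ?smin_gt0 //.
exact: le_trans (bigmin_le _ (Ordinal r_gt0) _) (le_bigmax _ _ _).
Qed.

Lemma halfmx_mul_tr {n} (U V : 'M[R]_(n, r)) : halfmx U s *m (halfmx V s)^T = Lstar U V s.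
Proof.
rewrite /halfmx /Lstar trmx_mul tr_diag_mx mulmxA -(mulmxA U) mulmx_diag.
congr (_ *m diag_mx _ *m _); apply/matrixP => i j.
by rewrite !mxE (ord1 i) -expr2 sqr_sqrtr // ltW.
Qed.

Lemma frob_halfmx_le {n} (U : 'M[R]_(n, r)) :
  U^T *m U = 1%:M -> frob (halfmx U s) ^+ 2 <= r%:R * smax s.
Proof.
move=> hU; rewrite -(frob_orthonormal_cols _ hU) mulrC !frob_sqr mulr_sumr.
apply: ler_sum => i _; rewrite mulr_sumr; apply: ler_sum => j _.
rewrite /halfmx mul_mx_diag !mxE exprMn sqr_sqrtr ?(ltW (s_gt0 j)) // mulrC.
by rewrite ler_wpM2l ?sqr_ge0 // le_bigmax.
Qed.

End SingularValues.

Section Incoherence.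
Context {R : realType} {n r : nat} (U : 'M[R]_(n, r)).
Hypotheses (r_gt0 : (0 < r)%N) (hU : U^T *m U = 1%:M).

Lemma orthonormal_cols_dim_gt0 : (0 < n)%N.
Proof.
move: U hU; case: n => // U0 hU0.
have := congr1 (fun A : 'M[R]_r => A (Ordinal r_gt0) (Ordinal r_gt0)) hU0.
by rewrite !mxE big_ord0 eqxx => /eqP; rewrite eq_sym oner_eq0.
Qed.

Lemma incoherence_ge1 (mu : R) :
  norm2inf U <= Num.sqrt (mu * r%:R / n%:R) -> 1 <= mu.
Proof.
move=> hmu; have n_gt0 : (0 : R) < n%:R by rewrite ltr0n orthonormal_cols_dim_gt0.
have r_gt0' : (0 : R) < r%:R by rewrite ltr0n.
have row_le i : \sum_j U i j ^+ 2 <= Num.sqrt (mu * r%:R / n%:R) ^+ 2.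
  rewrite -[leLHS]sqr_sqrtr ?sumr_ge0 // => [|j _]; last exact: sqr_ge0.
  rewrite lerXn2r ?nnegrE ?sqrtr_ge0 //.
  exact: le_trans (le_bigmax _ (fun i => Num.sqrt (\sum_j U i j ^+ 2)) i) hmu.
have : r%:R <= n%:R * Num.sqrt (mu * r%:R / n%:R) ^+ 2.
  rewrite -{1}(frob_orthonormal_cols _ hU) frob_sqr.
  apply: le_trans (ler_sum _ (fun i _ => row_le i)) _.
  by rewrite sumr_const card_ord mulr_natl.
have [neg|pos] := lerP (mu * r%:R / n%:R) 0.
  by rewrite ler0_sqrtr // expr0n mulr0 leNgt r_gt0'.
rewrite sqr_sqrtr ?(ltW pos) // mulrCA mulfV ?gt_eqF // mulr1.
by rewrite -[X in X <= _ -> _]mul1r ler_pM2r.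
Qed.

End Incoherence.

Section Tails.
Context {R : realType} {d : measure_display} {T : measurableType d} (P : probability T R).

Lemma measurable_abs_ge (f : T -> R) (a : R) :
  measurable_fun setT f -> measurable [set w | a <= `|f w|].
Proof.
move=> mf; have := measurableT_comp (@normr_measurable R setT) mf measurableT (measurable_itv `[a, +oo[%R).
rewrite setTI; congr measurable.
by apply/seteqP; split => w /=; rewrite in_itv /= andbT.
Qed.

Lemma subgaussian_tail (f : T -> R) (t a : R) :
  measurable_fun setT f -> 0 < t -> 0 <= a ->
  (\int[P]_w (expR (f w ^+ 2 / t ^+ 2))%:E <= 2%:E)%E ->
  (P [set w | (a <= `|f w|)%R] <= (2 / expR (a ^+ 2 / t ^+ 2))%:E)%E.
Proof.
move=> mf t_gt0 a_ge0 hint; set A := [set w | a <= `|f w|].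
have mA : measurable A by exact: measurable_abs_ge.
set c := expR (a ^+ 2 / t ^+ 2); have c_gt0 : 0 < c := expR_gt0 _.
have mg : measurable_fun setT (fun w => (expR (f w ^+ 2 / t ^+ 2))%:E).
  apply/measurable_EFinP; apply: measurableT_comp => //.
  by apply: measurable_funM; [exact: measurable_funX | exact: measurable_cst].
have markov : (c%:E * P A <= 2%:E)%E.
  rewrite -integral_cst //; apply: le_trans hint.
  apply: le_trans (ge0_subset_integral _ _ _ mg _ (subsetT A)); last first.
  - by move=> x _; rewrite lee_fin expR_ge0.
  - exact: measurableT.
  - exact: mA.
  apply: ge0_le_integral => //; first by move=> x _; rewrite lee_fin ltW.
    exact: measurable_funS mg.
  move=> x Ax; rewrite lee_fin ler_expR ler_wpM2r ?invr_ge0 ?sqr_ge0 //.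
  by rewrite -[f x ^+ 2]real_normK ?num_real // lerXn2r ?nnegrE.
have PA_fin : P A = (fine (P A))%:E.
  by rewrite fineK // ge0_fin_numE // (le_lt_trans (probability_le1 P mA)) // ltey.
by move: markov; rewrite PA_fin -EFinM !lee_fin ler_pdivlMr // mulrC.
Qed.

Lemma measure_bigsetU_ord_le m (F : 'I_m -> set T) (c : R) :
  (forall i, measurable (F i)) -> (forall i, (P (F i) <= c%:E)%E) ->
  (P (\big[setU/set0]_(i < m) F i) <= (c *+ m)%:E)%E.
Proof.
elim: m F => [|m IH] F mF hF; first by rewrite big_ord0 measure0 mulr0n.
rewrite big_ord_recr /= mulrSr EFinD.
apply: le_trans (measureU2 _ _ _) (leeD (IH _ _ _) (hF _)) => //.
by apply: bigsetU_measurable => i _.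
Qed.

Lemma expR_ge_pow (y : R) k : 0 <= y -> (y / k.+1%:R) ^+ k.+1 <= expR y.
Proof.
move=> y_ge0; have k_gt0 : (0 : R) < k.+1%:R by rewrite ltr0n.
have -> : expR y = expR (y / k.+1%:R) ^+ k.+1.
  by rewrite -expRM_natl mulrC divfK // lt0r_neq0.
rewrite lerXn2r ?nnegrE ?expR_ge0 ?divr_ge0 ?(ltW k_gt0) //.
by apply: le_trans _ (expR_ge1Dx _); rewrite lerDr.
Qed.

(* [(sigma n)^2 / (2 sigma)^2 = n^2 / 4] and [expR y >= (y / 26)^26] give [2 (104 / n^2)^26]. *)
Definition noise_tail_const : R := 2 * 104 ^+ 26.

Lemma noise_tail_const_gt0 : 0 < noise_tail_const.
Proof. by rewrite mulr_gt0 ?exprn_gt0. Qed.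

Lemma subgaussian_entry_tail (f : T -> R) (sigma : R) n :
  (0 < n)%N -> 0 < sigma -> measurable_fun setT f ->
  (\int[P]_w (expR (f w ^+ 2 / (2 * sigma) ^+ 2))%:E <= 2%:E)%E ->
  (P [set w | (sigma * n%:R <= `|f w|)%R] <= (noise_tail_const / n%:R ^+ 52)%:E)%E.
Proof.
move=> n_gt0 sigma_gt0 mf hf; have x_gt0 : (0 : R) < n%:R by rewrite ltr0n.
apply: le_trans (subgaussian_tail _ _ _ mf _ _ hf) _.
- by rewrite mulr_gt0.
- by rewrite mulr_ge0 // ltW.
have -> : (sigma * n%:R) ^+ 2 / (2 * sigma) ^+ 2 = n%:R ^+ 2 / 4.
  by field; rewrite gt_eqF.
have y_ge0 : (0 : R) <= n%:R ^+ 2 / 4 by rewrite divr_ge0 ?exprn_ge0 ?ltW.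
have c_ge0 : 0 <= noise_tail_const / n%:R ^+ 52.
  by rewrite divr_ge0 ?exprn_ge0 ?ltW ?noise_tail_const_gt0.
rewrite lee_fin ler_pdivrMr ?expR_gt0 //.
rewrite [leLHS](_ : _ = noise_tail_const / n%:R ^+ 52 * ((n%:R ^+ 2 / 4) / 26) ^+ 26).
  by apply: ler_wpM2l => //; apply: (expR_ge_pow _ 25).
by rewrite /noise_tail_const; field; rewrite gt_eqF.
Qed.

Lemma noise_bounded_whp {n} {E : T -> 'M[R]_n} {sigma : R} :
  (0 < n)%N -> 0 <= sigma ->
  (forall i j, measurable_fun setT (fun w => E w i j)) ->
  (forall i j t, sigma < t -> (\int[P]_w (expR (E w i j ^+ 2 / t ^+ 2))%:E <= 2%:E)%E) ->
  exists A : set T, [/\ measurable A, (P A <= (noise_tail_const / n%:R ^+ 50)%:E)%E &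
    forall w, ~ A w -> sigma = 0 \/ forall i j, `|E w i j| <= sigma * n%:R].
Proof.
move=> n_gt0 sigma_ge0 mE hE; have x_gt0 : (0 : R) < n%:R by rewrite ltr0n.
have [sigma0|sigma_neq0] := eqVneq sigma 0.
  exists set0; split => //; last by left.
  by rewrite measure0 lee_fin divr_ge0 ?exprn_ge0 ?ltW ?noise_tail_const_gt0.
have sigma_gt0 : 0 < sigma by rewrite lt_def sigma_neq0.
have mAij i j : measurable [set w | (sigma * n%:R <= `|E w i j|)%R].
  exact: measurable_abs_ge.
exists (\big[setU/set0]_(i < n) \big[setU/set0]_(j < n) [set w | (sigma * n%:R <= `|E w i j|)%R]).
split; first by do 2!(apply: bigsetU_measurable => ? _).
  apply: le_trans (@measure_bigsetU_ord_le _ _ ((noise_tail_const / n%:R ^+ 52) *+ n) _ _) _.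
  - by move=> i; apply: bigsetU_measurable => j _.
  - move=> i; apply: measure_bigsetU_ord_le => // j.
    apply: (subgaussian_entry_tail (fun w => E w i j)) => //.
    by apply: hE; rewrite ltr_pMl // ltr1n.
  rewrite lee_fin -mulrnA -[_ *+ (n * n)]mulr_natr natrM.
  have -> : n%:R ^+ 52 = n%:R ^+ 50 * (n%:R * n%:R) :> R by rewrite -expr2 -exprD.
  by rewrite invfM -!mulrA mulVf ?mulr1 ?mulf_neq0 ?gt_eqF.
move=> w hw; right => i j; rewrite leNgt; apply/negP => hij; apply: hw.
by rewrite (bigD1 i) //=; left; rewrite (bigD1 j) //=; left; exact: ltW.
Qed.

End Tails.

Section Loss.
Context {R : realType} {n r : nat} (p lam tau : R) (O : 'I_n -> 'I_n -> bool).

Lemma Floss_mulmx_orthogonal (M : 'M[R]_n) (X Y : 'M[R]_(n, r)) (S : 'M[R]_n) (H : 'M[R]_r) :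
  orthogonal_mx H -> Floss p lam tau O M (X *m H) (Y *m H) S = Floss p lam tau O M X Y S.
Proof.
move=> oH; rewrite /Floss /floss /resid !frob_mulmx_orthogonal //.
by rewrite trmx_mul mulmxA -(mulmxA X) orthogonal_mx_tr // mulmx1.
Qed.

(* At the ground truth the residual is the observed noise; the gap of the regularizers is
   controlled through (a), that of the l1 penalties through (e). *)
Lemma Floss_gap_truth_le (Ls Ss E : 'M[R]_n) (Xs Ys X Y : 'M[R]_(n, r)) (S : 'M[R]_n)
    (H : 'M[R]_r) (a th : R) :
  0 < p -> 0 <= lam -> 0 <= tau -> Xs *m Ys^T = Ls -> (forall i j, `|E i j| <= a) ->
  orthogonal_mx H -> 0 <= th -> frob (col_mx X Y *m H - col_mx Xs Ys) <= th * frob Xs ->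
  Floss p lam tau O (projOmega O (Ls + Ss + E)) Xs Ys Ss
    - Floss p lam tau O (projOmega O (Ls + Ss + E)) X Y S <=
    (n * n)%:R * a ^+ 2 / (2 * p)
    + lam / (2 * p) * (th * (frob (col_mx Xs Ys) ^+ 2 + frob Xs ^+ 2))
    + tau / p * ((n * n)%:R * spec (S - Ss)).
Proof.
move=> p_gt0 lam_ge0 tau_ge0 hL hE oH th_ge0 hF; set M := projOmega O _.
have fit_truth : frob (resid O M Xs Ys Ss) ^+ 2 <= (n * n)%:R * a ^+ 2.
  apply: frob_sqr_le_entries => i j; rewrite /resid /M hL !mxE.
  case: (O i j) => /=; last by rewrite normr0 (le_trans _ (hE i j)).
  by rewrite opprD addrA subrr sub0r normrN.
have reg_gap : frob Xs ^+ 2 + frob Ys ^+ 2 - (frob X ^+ 2 + frob Y ^+ 2)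
    <= th * (frob (col_mx Xs Ys) ^+ 2 + frob Xs ^+ 2).
  rewrite -[_ ^+ 2 + frob Ys ^+ 2]frob_col_mx -[frob X ^+ 2 + _]frob_col_mx.
  rewrite -(frob_mulmx_orthogonal (col_mx X Y) H oH).
  exact: frob_sqr_sub_le.
have sparse_gap := norm1_sub_le_spec S Ss.
have p2_ge0 : 0 <= 2 * p by rewrite mulr_ge0 // ltW.
have ip2_ge0 : 0 <= (2 * p)^-1 by rewrite invr_ge0.
have fit_ge0 : 0 <= (2 * p)^-1 * frob (resid O M X Y S) ^+ 2 by rewrite mulr_ge0 ?sqr_ge0.
have := ler_wpM2l (divr_ge0 lam_ge0 p2_ge0) reg_gap.
have := ler_wpM2l (divr_ge0 tau_ge0 (ltW p_gt0)) sparse_gap.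
have := ler_wpM2l ip2_ge0 fit_truth.
rewrite /Floss /floss; lra.
Qed.

End Loss.

Section Descent.
Context {R : realFieldType}.

Lemma descent_small_step {F G : nat -> R} {c b : R} {t0 : nat} :
  0 < c -> 0 <= b -> (0 < t0)%N ->
  (forall t, (0 < t <= t0)%N -> F t <= F t.-1 - c * G t.-1 ^+ 2) ->
  F 0%N - F t0 <= c * t0%:R * b ^+ 2 ->
  exists2 t, (t < t0)%N & G t <= b.
Proof.
move=> c_gt0 b_ge0 t0_gt0 hdesc hgap.
have tele k : (k <= t0)%N -> c * \sum_(t < k) G t ^+ 2 <= F 0%N - F k.
  elim: k => [|k IH] hk; first by rewrite big_ord0 mulr0 subrr.
  by rewrite big_ord_recr mulrDr; have := hdesc k.+1 hk; have := IH (ltnW hk); lra.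
case: (boolP [exists t : 'I_t0, G t <= b]) => [/existsP[t hGt]|]; first by exists t.
rewrite negb_exists => /forallP hG; exfalso.
have : c * (t0%:R * b ^+ 2) < c * \sum_(t < t0) G t ^+ 2.
  have -> : t0%:R * b ^+ 2 = \sum_(t < t0) b ^+ 2 by rewrite sumr_const card_ord mulr_natl.
  have sq_lt (t : 'I_t0) : b ^+ 2 < G t ^+ 2.
    have bG : b < G t by rewrite ltNge hG.
    by rewrite ltrXn2r ?nnegrE ?(le_trans b_ge0 (ltW bG)).
  set t1 : 'I_t0 := Ordinal t0_gt0.
  rewrite ltr_pM2l // [ltLHS](bigD1 t1) // [ltRHS](bigD1 t1) //.
  by rewrite ltr_leD //; apply: ler_sum => t _; rewrite ltW.
by rewrite mulrA; have := tele t0 (leqnn t0); lra.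
Qed.

End Descent.

Section Arithmetic.
Context {R : realType}.

Lemma sqrtr_le_self (a : R) : 1 <= a -> Num.sqrt a <= a.
Proof.
move=> a_ge1; have a_ge0 : 0 <= a by lra.
rewrite -{2}(sqr_sqrtr a_ge0) expr2 ler_peMr ?sqrtr_ge0 //.
by rewrite -sqrtr1 ler_sqrt.
Qed.

Lemma sample_size_regime {x p K mu r L : R} :
  0 < p -> p <= 1 -> 1 <= K -> 1 <= mu -> 1 <= r -> 1 <= L -> 1 <= x ->
  K ^+ 3 * mu * r * x * L ^+ 2 <= x ^+ 2 * p -> r * K <= x /\ K ^+ 4 <= x ^+ 2.
Proof.
move=> p_gt0 p_le1 K_ge1 mu_ge1 r_ge1 L_ge1 x_ge1 hsample.
have K3_ge : K <= K ^+ 3 by rewrite ler_eXnr.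
have muL_ge1 : 1 <= mu * L ^+ 2 by rewrite -[1]mulr1 ler_pM ?expr_ge1 //; lra.
have K3rx_ge0 : 0 <= K ^+ 3 * r * x by rewrite !mulr_ge0 ?exprn_ge0 //; lra.
have K3r_le : K ^+ 3 * r <= x.
  rewrite -(ler_pM2r (_ : 0 < x)); last lra.
  have : K ^+ 3 * r * x <= K ^+ 3 * r * x * (mu * L ^+ 2) by rewrite ler_peMr.
  have : x ^+ 2 * p <= x ^+ 2 by rewrite ler_piMr ?sqr_ge0.
  have -> : K ^+ 3 * r * x * (mu * L ^+ 2) = K ^+ 3 * mu * r * x * L ^+ 2 by ring.
  rewrite expr2; lra.
have K3_le : K ^+ 3 <= x by apply: le_trans K3r_le; rewrite ler_peMr //; lra.
split; first by rewrite mulrC (le_trans _ K3r_le) // ler_pM //; lra.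
by rewrite exprS expr2 ler_pM ?exprn_ge0 //; lra.
Qed.

Section NoisyRegime.
Context {x p sigma L Clam : R}.

Let lam := Clam * sigma * Num.sqrt (x * p * L).

Lemma lam_ge0 : 0 <= sigma -> 0 <= Clam -> 0 <= lam.
Proof. by move=> sigma_ge0 Clam_ge0; rewrite /lam !mulr_ge0 ?sqrtr_ge0. Qed.

Lemma lam_sqr : 0 <= p -> 0 <= x -> 0 <= L -> lam ^+ 2 = Clam ^+ 2 * sigma ^+ 2 * (x * p * L).
Proof. by move=> p_ge0 x_ge0 L_ge0; rewrite /lam !exprMn sqr_sqrtr // !mulr_ge0. Qed.

Lemma lam_psi_le : 0 < p -> 0 <= sigma -> 0 <= Clam -> 1 <= x -> 1 <= L ->
  lam * (sigma * Num.sqrt (x / p) + lam / p) <= (Clam + Clam ^+ 2) * sigma ^+ 2 * x * L.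
Proof.
move=> p_gt0 sigma_ge0 Clam_ge0 x_ge1 L_ge1.
have cross : Num.sqrt (x * p * L) * Num.sqrt (x / p) <= x * L.
  rewrite -sqrtrM ?mulr_ge0 //; try lra.
  have -> : x * p * L * (x / p) = x ^+ 2 * L by field; rewrite gt_eqF.
  rewrite sqrtrM ?sqr_ge0 // sqrtr_sqr ger0_norm; last lra.
  by rewrite ler_wpM2l ?sqrtr_le_self //; lra.
have -> : lam * (sigma * Num.sqrt (x / p) + lam / p)
    = Clam * sigma ^+ 2 * (Num.sqrt (x * p * L) * Num.sqrt (x / p)) + lam ^+ 2 / p.
  by rewrite /lam; field; rewrite gt_eqF.
rewrite lam_sqr; try lra.
rewrite (_ : Clam ^+ 2 * sigma ^+ 2 * (x * p * L) / p = Clam ^+ 2 * sigma ^+ 2 * x * L).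
  by have := ler_wpM2l (mulr_ge0 Clam_ge0 (sqr_ge0 sigma)) cross; lra.
by field; rewrite gt_eqF.
Qed.

Lemma regularizer_term_le {sm K r CF FF : R} :
  let psi := sigma / sm * Num.sqrt (x / p) + lam / (p * sm) in
  0 < p -> 0 <= sigma -> 0 <= Clam -> 1 <= x -> 1 <= L ->
  0 < sm -> 0 <= CF -> 0 <= r -> 0 <= K -> r * K <= x -> FF <= 3 * (r * (K * sm)) ->
  lam / (2 * p) * (CF * psi * FF) <= 3 / 2 * CF * (Clam + Clam ^+ 2) * (sigma ^+ 2 / p) * x ^+ 2 * L.
Proof.
move=> psi p_gt0 sigma_ge0 Clam_ge0 x_ge1 L_ge1 sm_gt0 CF_ge0 r_ge0 K_ge0 rK_le hFF.
have lam_ge0' := lam_ge0 sigma_ge0 Clam_ge0.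
have psi_sm : psi * sm = sigma * Num.sqrt (x / p) + lam / p by rewrite /psi; field; rewrite !gt_eqF.
have psi_ge0 : 0 <= psi.
  by rewrite /psi addr_ge0 ?mulr_ge0 ?divr_ge0 ?invr_ge0 ?sqrtr_ge0 ?mulr_ge0 // ltW.
have c_ge0 : 0 <= 3 * CF * (r * K) / (2 * p) by rewrite divr_ge0 ?mulr_ge0 //; lra.
apply: le_trans (_ : lam / (2 * p) * (CF * psi * (3 * (r * (K * sm)))) <= _).
  apply: ler_wpM2l; first by rewrite divr_ge0 //; lra.
  by apply: ler_wpM2l; rewrite ?mulr_ge0.
rewrite (_ : _ * _ = 3 * CF * (r * K) / (2 * p) * (lam * (psi * sm))); last by field; rewrite gt_eqF.
rewrite psi_sm; apply: le_trans (ler_wpM2l c_ge0 (lam_psi_le _ _ _ _ _)) _ => //.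
set Q := 3 / 2 * CF * (Clam + Clam ^+ 2) * (sigma ^+ 2 / p).
have QxL_ge0 : 0 <= Q * x * L.
  by rewrite !mulr_ge0 ?addr_ge0 ?sqr_ge0 ?invr_ge0 //; lra.
rewrite [leLHS](_ : _ = Q * x * L * (r * K)); last by rewrite /Q; field; rewrite gt_eqF.
by rewrite [leRHS](_ : _ = Q * x * L * x) ?ler_wpM2l // /Q; ring.
Qed.

Lemma sparsity_term_le {Ctau CS e : R} :
  0 < p -> p <= 1 -> 0 <= sigma -> 1 <= x -> 1 <= L -> 0 <= Ctau -> 0 <= CS ->
  e <= CS * sigma * Num.sqrt (x * p) ->
  Ctau * sigma * Num.sqrt L / p * (x * x * e) <= Ctau * CS * (sigma ^+ 2 / p) * x ^+ 3 * L.
Proof.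
move=> p_gt0 p_le1 sigma_ge0 x_ge1 L_ge1 Ctau_ge0 CS_ge0 he.
have c_ge0 : 0 <= Ctau * sigma * Num.sqrt L / p * (x * x).
  by rewrite !mulr_ge0 ?sqrtr_ge0 ?invr_ge0; lra.
have sqrt_xp : Num.sqrt (x * p) <= x.
  rewrite -[leRHS]ger0_norm -?sqrtr_sqr ?ler_sqrt ?sqr_ge0 // ?expr2 ?ler_wpM2l; lra.
apply: le_trans (_ : Ctau * sigma * Num.sqrt L / p * (x * x) * (CS * sigma * x) <= _).
  by rewrite mulrA ler_wpM2l // (le_trans he) // ler_wpM2l ?mulr_ge0.
rewrite (_ : _ * _ = Ctau * CS * (sigma ^+ 2 / p) * x ^+ 3 * Num.sqrt L); last by field; rewrite gt_eqF.
by rewrite ler_wpM2l ?sqrtr_le_self ?mulr_ge0 ?exprn_ge0 ?sqr_ge0 ?invr_ge0 //; lra.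
Qed.

(* With [eta >= ceta / (n kappa^4 smin)] and [t0 = n^47] the budget is of order [n^7 / kappa^4]. *)
Lemma descent_budget_ge {sm K ceta eta : R} :
  0 < p -> 1 <= x -> 0 <= L -> 0 < sm -> 1 <= K -> K ^+ 4 <= x ^+ 2 -> 0 < ceta ->
  ceta / (x * K ^+ 3 * (K * sm)) <= eta ->
  ceta * Clam ^+ 2 * (sigma ^+ 2 / p) * x ^+ 5 * L / 2
    <= eta / 2 * x ^+ 47 * ((x ^+ 20)^-1 * (lam / p) * Num.sqrt sm) ^+ 2.
Proof.
move=> p_gt0 x_ge1 L_ge0 sm_gt0 K_ge1 K4_le ceta_gt0 heta.
have [x_gt0 K_gt0] : 0 < x /\ 0 < K by split; lra.
have [x_ge0 sm_ge0 p_ge0] : [/\ 0 <= x, 0 <= sm & 0 <= p] by split; lra.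
have q_ge0 : 0 <= sigma ^+ 2 / p by rewrite divr_ge0 ?sqr_ge0.
set V := ceta * Clam ^+ 2 * (sigma ^+ 2 / p) * x ^+ 5 * L / 2.
have V_ge0 : 0 <= V := divr_ge0 (mulr_ge0 (mulr_ge0 (mulr_ge0 (mulr_ge0
  (ltW ceta_gt0) (sqr_ge0 Clam)) q_ge0) (exprn_ge0 5 x_ge0)) L_ge0) (ler0n _ 2).
set W := x ^+ 8 * Clam ^+ 2 * sigma ^+ 2 * L * sm / (2 * p).
have W_ge0 : 0 <= W := divr_ge0 (mulr_ge0 (mulr_ge0 (mulr_ge0 (mulr_ge0
  (exprn_ge0 8 x_ge0) (sqr_ge0 Clam)) (sqr_ge0 sigma)) L_ge0) sm_ge0) (mulr_ge0 (ler0n _ 2) p_ge0).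
rewrite [leRHS](_ : _ = eta * W); last first.
  rewrite !exprMn (sqr_sqrtr sm_ge0) sqr_sqrtr ?mulr_ge0 // /W -exprVn.
  by field; rewrite !gt_eqF ?exprn_gt0.
apply: le_trans (ler_wpM2r W_ge0 heta).
rewrite [leRHS](_ : _ = V * (x ^+ 2 / K ^+ 4)); last first.
  by rewrite /V /W; field; rewrite !gt_eqF ?exprn_gt0.
by rewrite ler_peMr // ler_pdivlMr ?mul1r ?exprn_gt0.
Qed.

End NoisyRegime.

Lemma lower_order_le_leading {q x L A B G : R} :
  0 <= q -> 1 <= x -> 1 <= L -> 0 <= A -> 0 <= B -> 0 < G -> (1 + 2 * A + 2 * B) / G <= x ->
  q * x ^+ 4 / 2 + A * q * x ^+ 2 * L + B * q * x ^+ 3 * L <= G * q * x ^+ 5 * L / 2.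
Proof.
move=> q_ge0 x_ge1 L_ge1 A_ge0 B_ge0 G_gt0; rewrite ler_pdivrMr // => hx.
have x4_ge0 : 0 <= x ^+ 4 by rewrite exprn_ge0 //; lra.
have x2_le : x ^+ 2 <= x ^+ 4 by rewrite ler_weXn2l.
have x3_le : x ^+ 3 <= x ^+ 4 by rewrite ler_weXn2l.
have qL_ge0 : 0 <= q * L by rewrite mulr_ge0 //; lra.
have := ler_wpM2l (mulr_ge0 qL_ge0 x4_ge0) hx.
have := ler_wpM2l (mulr_ge0 A_ge0 qL_ge0) x2_le.
have := ler_wpM2l (mulr_ge0 B_ge0 qL_ge0) x3_le.
have := ler_wpM2l (mulr_ge0 q_ge0 x4_ge0) L_ge1.
rewrite [x ^+ 5]exprS; nra.
Qed.

Lemma one_le_pow_ratio (C N x : R) k :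
  0 <= C -> 0 < x -> x < N -> 1 <= (C + N ^+ k) * (x ^+ k)^-1.
Proof.
move=> C_ge0 x_gt0 x_lt; rewrite ler_pdivlMr ?exprn_gt0 // mul1r ler_wpDl //.
by rewrite lerXn2r ?nnegrE ?ltW // (lt_trans x_gt0).
Qed.

End Arithmetic.

Lemma Floss_eq_noiseless {R : realType} {n r : nat} {CF Cop Cinf CB CS sigma p lam eta tau : R}
    {s : 'rV[R]_r} {Xs Ys X Y : 'M[R]_(n, r)} {Ss S M : 'M[R]_n} {O : 'I_n -> 'I_n -> bool} :
  sigma = 0 -> lam = 0 ->
  hyps_ae CF Cop Cinf CB CS sigma p lam eta s Xs Ys Ss X Y S ->
  Floss p lam tau O M X Y S = Floss p lam tau O M Xs Ys Ss.
Proof.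
move=> -> -> /= [[H [oH _ hF _ _]] _ hS].
move: hF hS; rewrite !(mul0r, mulr0, add0r) => /frob_le0_eq0/eqP hF /spec_le0_eq0/eqP.
rewrite subr_eq0 => /eqP <-; move: hF; rewrite mul_col_mx subr_eq0 => /eqP/eq_col_mx[<- <-].
by rewrite Floss_mulmx_orthogonal.
Qed.

(* [expR 1] makes [ln n >= 1]; the second summand makes the leading term of
   [lower_order_le_leading] dominate. *)
Definition dim_threshold {R : realType} (CF CS Clam Ctau ceta : R) : R :=
  expR 1 + (1 + 2 * (3 / 2 * CF * (Clam + Clam ^+ 2)) + 2 * (Ctau * CS)) / (ceta * Clam ^+ 2).

Section GradientBound.
Context {R : realType} {n r : nat} {U V : 'M[R]_(n, r)} {s : 'rV[R]_r}.
Context {mu p sigma eta Clam Ctau CF CS ceta : R}.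
Context {O : 'I_n -> 'I_n -> bool} {Ss E : 'M[R]_n}.
Hypotheses (r_gt0 : (0 < r)%N) (hU : U^T *m U = 1%:M) (hV : V^T *m V = 1%:M)
  (s_gt0 : forall i, 0 < s 0 i) (p_gt0 : 0 < p) (p_le1 : p <= 1) (sigma_ge0 : 0 <= sigma)
  (Clam_gt0 : 0 < Clam) (Ctau_ge0 : 0 <= Ctau) (CF_gt0 : 0 < CF) (CS_gt0 : 0 < CS)
  (ceta_gt0 : 0 < ceta) (heta : ceta / (n%:R * kappa s ^+ 3 * smax s) <= eta).

Let A0 := 3 / 2 * CF * (Clam + Clam ^+ 2).
Let B0 := Ctau * CS.
Let G0 := ceta * Clam ^+ 2.

Let A0_ge0 : 0 <= A0 := mulr_ge0 (mulr_ge0 (divr_ge0 (ler0n _ 3) (ler0n _ 2)) (ltW CF_gt0))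
  (addr_ge0 (ltW Clam_gt0) (sqr_ge0 Clam)).
Let B0_ge0 : 0 <= B0 := mulr_ge0 Ctau_ge0 (ltW CS_gt0).
Let G0_gt0 : 0 < G0 := mulr_gt0 ceta_gt0 (exprn_gt0 2 Clam_gt0).

Lemma large_dim_regime :
  norm2inf U <= Num.sqrt (mu * r%:R / n%:R) ->
  kappa s ^+ 3 * mu * r%:R * n%:R * ln n%:R ^+ 2 <= n%:R ^+ 2 * p ->
  dim_threshold CF CS Clam Ctau ceta <= n%:R ->
  [/\ 1 <= n%:R :> R, 1 <= ln n%:R :> R, r%:R * kappa s <= n%:R, kappa s ^+ 4 <= n%:R ^+ 2
    & (1 + 2 * A0 + 2 * B0) / G0 <= n%:R].
Proof.
move=> hmu hsample; rewrite /dim_threshold -/A0 -/B0 -/G0 => hn.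
have frac_ge0 : 0 <= (1 + 2 * A0 + 2 * B0) / G0.
  by rewrite divr_ge0 ?(ltW G0_gt0) //; move: A0_ge0 B0_ge0; lra.
have e_ge2 := expR_ge1Dx (1 : R).
have x_ge1 : 1 <= n%:R :> R by move: hn; lra.
have L_ge1 : 1 <= ln n%:R :> R.
  by rewrite -[X in X <= _](expRK 1) ler_ln ?posrE ?expR_gt0 //; move: hn; lra.
have r_ge1 : 1 <= r%:R :> R by rewrite ler1n.
have [rK_le K4_le] := sample_size_regime p_gt0 p_le1 (kappa_ge1 s r_gt0 s_gt0)
  (incoherence_ge1 U r_gt0 hU mu hmu) r_ge1 L_ge1 x_ge1 hsample.
by split => //; move: hn; have := expR_gt0 (1 : R); lra.
Qed.

Lemma step_size_gt0 : (0 < n)%N -> 0 < eta.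
Proof.
move=> n_gt0; apply: lt_le_trans heta; rewrite divr_gt0 //.
have K_gt0 : 0 < kappa s := lt_le_trans ltr01 (kappa_ge1 s r_gt0 s_gt0).
have x_gt0 : (0 : R) < n%:R by rewrite ltr0n.
exact: mulr_gt0 (mulr_gt0 x_gt0 (exprn_gt0 3 K_gt0)) (smax_gt0 s r_gt0 s_gt0).
Qed.

Let lam := Clam * sigma * Num.sqrt (n%:R * p * ln n%:R).
Let tau := Ctau * sigma * Num.sqrt (ln n%:R).
Let budget := eta / 2 * (n ^ 47)%:R * ((n%:R ^+ 20)^-1 * (lam / p) * Num.sqrt (smin s)) ^+ 2.

Let M := projOmega O (Lstar U V s + Ss + E).

Lemma Floss_gap_noisy_le (X Y : 'M[R]_(n, r)) (S : 'M[R]_n) (Cop Cinf CB : R) :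
  1 <= n%:R :> R -> 1 <= ln n%:R :> R -> r%:R * kappa s <= n%:R -> kappa s ^+ 4 <= n%:R ^+ 2 ->
  (1 + 2 * A0 + 2 * B0) / G0 <= n%:R -> (forall i j, `|E i j| <= sigma * n%:R) ->
  hyps_ae CF Cop Cinf CB CS sigma p lam eta s (halfmx U s) (halfmx V s) Ss X Y S ->
  Floss p lam tau O M (halfmx U s) (halfmx V s) Ss - Floss p lam tau O M X Y S <= budget.
Proof.
move=> x_ge1 L_ge1 rK_le K4_le frac_le hE /= [[H [oH _ hF _ _]] _ hS].
set psi := (sigma / smin s * _ + _) in hF.
have sm_gt0 := smin_gt0 s r_gt0 s_gt0.
have K_ge1 := kappa_ge1 s r_gt0 s_gt0.
have lam_ge0 : 0 <= lam := mulr_ge0 (mulr_ge0 (ltW Clam_gt0) sigma_ge0) (sqrtr_ge0 _).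
have tau_ge0 : 0 <= tau := mulr_ge0 (mulr_ge0 Ctau_ge0 sigma_ge0) (sqrtr_ge0 _).
have th_ge0 : 0 <= CF * psi := mulr_ge0 (ltW CF_gt0) (addr_ge0
  (mulr_ge0 (divr_ge0 sigma_ge0 (ltW sm_gt0)) (sqrtr_ge0 _))
  (divr_ge0 lam_ge0 (mulr_ge0 (ltW p_gt0) (ltW sm_gt0)))).
have gap := Floss_gap_truth_le p lam tau O _ Ss _ _ _ _ _ S _ _ _ p_gt0 lam_ge0 tau_ge0
  (halfmx_mul_tr s s_gt0 U V) hE oH th_ge0 hF.
have FF_le : frob (col_mx (halfmx U s) (halfmx V s)) ^+ 2 + frob (halfmx U s) ^+ 2
    <= 3 * (r%:R * (kappa s * smin s)).
  have := frob_halfmx_le s s_gt0 U hU; have := frob_halfmx_le s s_gt0 V hV.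
  by rewrite frob_col_mx -(smax_kappa s r_gt0 s_gt0); lra.
have reg := regularizer_term_le p_gt0 sigma_ge0 (ltW Clam_gt0) x_ge1 L_ge1 sm_gt0 (ltW CF_gt0)
  (ler0n _ r) (le_trans ler01 K_ge1) rK_le FF_le.
have sparse := sparsity_term_le p_gt0 p_le1 sigma_ge0 x_ge1 L_ge1 Ctau_ge0 (ltW CS_gt0) hS.
have low := lower_order_le_leading (divr_ge0 (sqr_ge0 sigma) (ltW p_gt0)) x_ge1 L_ge1
  A0_ge0 B0_ge0 G0_gt0 frac_le.
have heta' : ceta / (n%:R * kappa s ^+ 3 * (kappa s * smin s)) <= eta.
  by rewrite -(smax_kappa s r_gt0 s_gt0).
have lead := descent_budget_ge (sigma := sigma) (Clam := Clam) p_gt0 x_ge1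
  (le_trans ler01 L_ge1) sm_gt0 K_ge1 K4_le ceta_gt0 heta'.
have noise_term : (n * n)%:R * (sigma * n%:R) ^+ 2 / (2 * p) = sigma ^+ 2 / p * n%:R ^+ 4 / 2.
  by rewrite natrM; field; rewrite gt_eqF.
move: gap reg sparse low lead; rewrite /budget noise_term natrM natrX /psi /tau /lam /A0 /B0 /G0.
lra.
Qed.

Lemma exists_small_gradient (Cop Cinf CB : R) (it : nat -> 'M[R]_(n, r) * 'M[R]_(n, r) * 'M[R]_n) :
  let F t := Floss p lam tau O M (it t).1.1 (it t).1.2 (it t).2 in
  let G t := gradnorm p lam O M (it t).1.1 (it t).1.2 (it t).2 in
  norm2inf U <= Num.sqrt (mu * r%:R / n%:R) ->
  kappa s ^+ 3 * mu * r%:R * n%:R * ln n%:R ^+ 2 <= n%:R ^+ 2 * p ->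
  dim_threshold CF CS Clam Ctau ceta <= n%:R ->
  (sigma = 0 \/ forall i j, `|E i j| <= sigma * n%:R) ->
  it 0%N = (halfmx U s, halfmx V s, Ss) ->
  (forall t, (1 <= t <= n ^ 47)%N -> F t <= F t.-1 - eta / 2 * G t.-1 ^+ 2) ->
  hyps_ae CF Cop Cinf CB CS sigma p lam eta s (halfmx U s) (halfmx V s) Ss
    (it (n ^ 47)%N).1.1 (it (n ^ 47)%N).1.2 (it (n ^ 47)%N).2 ->
  exists t, (t < n ^ 47)%N /\ G t <= (n%:R ^+ 20)^-1 * (lam / p) * Num.sqrt (smin s).
Proof.
move=> F G hmu hsample hn hnoise it0 hdesc hyps.
have [x_ge1 L_ge1 rK_le K4_le frac_le] := large_dim_regime hmu hsample hn.
have n_gt0 : (0 < n)%N by rewrite -(ltr0n R); apply: lt_le_trans x_ge1.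
have eta_gt0 := step_size_gt0 n_gt0.
have gap : F 0%N - F (n ^ 47)%N <= budget.
  rewrite /F it0 /=; case: hnoise => [sigma0 | hE].
    rewrite (Floss_eq_noiseless sigma0 _ hyps) ?subrr; last by rewrite /lam sigma0 mulr0 mul0r.
    by rewrite /budget mulr_ge0 ?sqr_ge0 // mulr_ge0 ?ler0n // divr_ge0 // ltW.
  exact: Floss_gap_noisy_le x_ge1 L_ge1 rK_le K4_le frac_le hE hyps.
have b_ge0 : 0 <= (n%:R ^+ 20)^-1 * (lam / p) * Num.sqrt (smin s).
  rewrite mulr_ge0 ?sqrtr_ge0 // mulr_ge0 ?invr_ge0 ?exprn_ge0 ?ler0n //.
  by rewrite divr_ge0 ?mulr_ge0 ?sqrtr_ge0 // ?ltW.
have eta2_gt0 : 0 < eta / 2 by rewrite divr_gt0.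
have t0_gt0 : (0 < n ^ 47)%N by rewrite expn_gt0 n_gt0.
have [t ht hGt] := descent_small_step eta2_gt0 b_ge0 t0_gt0 hdesc gap.
by exists t.
Qed.

End GradientBound.

Theorem mainTheorem1 (R : realType) (CF Cop Cinf CB CS ceta_lo ceta_hi : R) :
  0 < CF -> 0 < Cop -> 0 < Cinf -> 0 < CB -> 0 < CS ->
  0 < ceta_lo -> ceta_lo <= ceta_hi ->
  exists Clam0 Ctau0 : R, forall Clam Ctau : R, Clam0 <= Clam -> Ctau0 <= Ctau ->
  exists c1 c2 C0 : R, [/\ 0 < c1, 0 < c2, 0 < C0 &
  forall (n r : nat) (d : measure_display) (T : measurableType d) (P : probability T R)
    (U V : 'M[R]_(n, r)) (s : 'rV[R]_r) (mu p rhos rhoaug sigma eta : R)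
    (obs aug star : T -> 'I_n -> 'I_n -> bool) (sg : T -> 'I_n -> 'I_n -> R)
    (E : T -> 'M[R]_n) (Smag : 'M[R]_n),
    (0 < r)%N ->
    (* SVD of L* and incoherence *)
    U^T *m U = 1%:M -> V^T *m V = 1%:M -> (forall i, 0 < s 0 i) ->
    norm2inf U <= Num.sqrt (mu * r%:R / n%:R) ->
    norm2inf V <= Num.sqrt (mu * r%:R / n%:R) ->
    (* random model *)
    0 < p <= 1 -> 0 <= rhos -> rhos <= rhoaug -> rhoaug <= 1 -> 0 <= sigma ->
    rpca_model P obs aug star sg E p rhos rhoaug sigma ->
    (* sample size, noise level, step size *)
    n%:R ^+ 2 * p >= c1 * kappa s ^+ 3 * mu * r%:R * n%:R * ln n%:R ^+ 2 ->
    sigma / smin s * Num.sqrt (n%:R / p)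
      <= (c2 * Num.sqrt (kappa s ^+ 4 * mu * r%:R * ln n%:R))^-1 ->
    ceta_lo / (n%:R * kappa s ^+ 3 * smax s) <= eta ->
    eta <= ceta_hi / (n%:R * kappa s ^+ 3 * smax s) ->
    let lam := Clam * sigma * Num.sqrt (n%:R * p * ln n%:R) in
    let tau := Ctau * sigma * Num.sqrt (ln n%:R) in
    let t0 := (n ^ 47)%N in
    let Xs := halfmx U s in
    let Ys := halfmx V s in
    let Ls := Lstar U V s in
    let Ss := Sstar star sg Smag in
    let M := fun w => projOmega (obs w) (Ls + Ss w + E w) in
    let it := fun w t => gd_iter p lam tau eta (obs w) (M w) Xs Ys (Ss w) t in
    let bad := [set w |
        (forall t, (t <= t0)%N ->
           hyps_ae CF Cop Cinf CB CS sigma p lam eta s Xs Ys (Ss w)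
             (it w t).1.1 (it w t).1.2 (it w t).2) /\
        (forall t, (1 <= t <= t0)%N ->
           Floss p lam tau (obs w) (M w) (it w t).1.1 (it w t).1.2 (it w t).2
           <= Floss p lam tau (obs w) (M w)
                (it w t.-1).1.1 (it w t.-1).1.2 (it w t.-1).2
              - eta / 2 * gradnorm p lam (obs w) (M w)
                (it w t.-1).1.1 (it w t.-1).1.2 (it w t.-1).2 ^+ 2) /\
        ~ (exists t, (t < t0)%N /\
             gradnorm p lam (obs w) (M w) (it w t).1.1 (it w t).1.2 (it w t).2
             <= (n%:R ^+ 20)^-1 * (lam / p) * Num.sqrt (smin s))] in
    exists A : set T, [/\ measurable A, bad `<=` A &
                         (P A <= (C0 * (n%:R ^+ 50)^-1)%:E)%E]].
Proof.
move=> CF_gt0 _ _ _ CS_gt0 ceta_gt0 _; exists 1, 0 => Clam Ctau Clam_ge1 Ctau_ge0.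
set N0 := dim_threshold CF CS Clam Ctau ceta_lo.
have C_gt0 : 0 < noise_tail_const :> R := noise_tail_const_gt0.
exists 1, 1, (noise_tail_const + N0 ^+ 50); split => //.
  by rewrite ltr_wpDr ?exprn_even_ge0.
move=> n r d T P U V s mu p rhos rhoaug sigma eta obs aug star sg E Smag r_gt0 hU hV s_gt0
  hmu _ /andP[p_gt0 p_le1] _ _ _ sigma_ge0 [hmeas _ _ _ hsubg] hsample _ heta _
  lam tau t0 Xs Ys Ls Ss M it bad.
have n_gt0 := orthonormal_cols_dim_gt0 U r_gt0 hU.
have x_gt0 : (0 : R) < n%:R by rewrite ltr0n.
have [n_small | n_large] := ltrP n%:R N0.
  by exists setT; split => //; rewrite probability_setT lee_fin one_le_pow_ratio // ltW.
have [A [mA PA hA]] := noise_bounded_whp P n_gt0 sigma_ge0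
  (fun i j => let: And5 _ _ _ _ mE := hmeas i j in mE)
  (fun i j => let: And3 _ _ hE := hsubg i j in hE).
exists A; split => //; last first.
  apply: le_trans PA _; rewrite lee_fin ler_wpM2r ?invr_ge0 ?exprn_ge0 ?(ltW x_gt0) //.
  by rewrite lerDl exprn_even_ge0.
move=> w [hyps [hdesc hnosmall]]; apply: contrapT => /hA hE; apply: hnosmall.
rewrite mul1r in hsample.
exact: (exists_small_gradient r_gt0 hU hV s_gt0 p_gt0 p_le1 sigma_ge0 (lt_le_trans ltr01 Clam_ge1)
  Ctau_ge0 CF_gt0 CS_gt0 ceta_gt0 heta Cop Cinf CB (it w) hmu hsample n_large hE erefl hdesc
  (hyps t0 (leqnn t0))).
Qed.
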